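(* Let $k \ge 1$ and $m \in \{4k+3, 4k+5\}$, $\theta = 2\pi/m$. For every finite point set $P$ in general position and every $u, w \in P$, the path produced by $\theta$-routing from $u$ to $w$ in the $\theta_m$-graph on $P$ has length at most $$\left(1 + \frac{2\sin(\theta/2)\cos(\theta/4)}{\cos(\theta/2) - \sin(3\theta/4)}\right)|uw|.$$
   Context: Cones: for $m \ge 2$, $\theta = 2\pi/m$; around each point $u$ draw $m$ rays with consecutive angular separation $\theta$, oriented so the vertical upward ray from $u$ bisects a cone $C_0^u$; cones numbered clockwise, same orientation at every point. General position: no two points on a line parallel to a cone boundary ray, no two on a line perpendicular to a cone bisector, no three collinear. The $\theta_m$-graph on $P$: for each $u\in P$ and each cone $C_i^u$ containing another point of $P$, add an edge from $u$ to the point of $C_i^u$ whose orthogonal projection onto the bisector of $C_i^u$ is closest to $u$; edges weighted by Euclidean length. $\theta$-routing with destination $t$: at the current vertex $x$, if $xt$ is an edge, follow it; otherwise follow the edge from $x$ in the cone of $x$ containing $t$. *)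

From Stdlib Require Import Reals Lra List.
Import ListNotations.
Open Scope R_scope.

Definition point := (R * R)%type.

Definition dot (a b : point) : R := fst a * fst b + snd a * snd b.
Definition cross (a b : point) : R := fst a * snd b - snd a * fst b.
Definition vsub (a b : point) : point := (fst a - fst b, snd a - snd b).

Definition edist (p q : point) : R :=
  sqrt ((fst p - fst q) ^ 2 + (snd p - snd q) ^ 2).

Definition theta (m : nat) : R := 2 * PI / INR m.

(* Unit direction of the bisector of cone C_i: cones are numbered clockwise
   starting with C_0 bisected by the upward vertical ray, so the bisector
   of C_i makes angle pi/2 - i*theta with the positive x-axis. *)
Definition bisector (m i : nat) : point :=
  (cos (PI / 2 - INR i * theta m), sin (PI / 2 - INR i * theta m)).

Definition boundary_ray (m j : nat) : point :=
  (cos (PI / 2 + theta m / 2 - INR j * theta m),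
   sin (PI / 2 + theta m / 2 - INR j * theta m)).

(* v lies in the cone C_i^u: the angle between v - u and the bisector of
   C_i is at most theta/2 (closed cone; boundaries are irrelevant under
   general position). *)
Definition in_cone (m : nat) (u : point) (i : nat) (v : point) : Prop :=
  (i < m)%nat /\ v <> u /\
  dot (vsub v u) (bisector m i) >= edist v u * cos (theta m / 2).

Definition proj (m : nat) (u : point) (i : nat) (v : point) : R :=
  dot (vsub v u) (bisector m i).

Definition general_position (m : nat) (P : list point) : Prop :=
  (forall u v, In u P -> In v P -> u <> v ->
     (forall j, (j < m)%nat -> cross (vsub v u) (boundary_ray m j) <> 0) /\
     (forall i, (i < m)%nat -> dot (vsub v u) (bisector m i) <> 0)) /\
  (forall a b c, In a P -> In b P -> In c P -> a <> b -> b <> c -> a <> c ->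
     cross (vsub b a) (vsub c a) <> 0).

Definition cone_nbr (m : nat) (P : list point) (u : point) (i : nat)
    (v : point) : Prop :=
  In v P /\ in_cone m u i v /\
  forall w, In w P -> in_cone m u i w -> proj m u i v <= proj m u i w.

Definition theta_edge (m : nat) (P : list point) (u v : point) : Prop :=
  In u P /\ exists i, cone_nbr m P u i v.

Definition theta_adj (m : nat) (P : list point) (u v : point) : Prop :=
  theta_edge m P u v \/ theta_edge m P v u.

Definition route_step (m : nat) (P : list point) (t x y : point) : Prop :=
  (theta_adj m P x t /\ y = t) \/
  (~ theta_adj m P x t /\ exists i, in_cone m x i t /\ cone_nbr m P x i y).

(* A (completed) theta-routing path from u to t: the list
   x_0 = u, x_1, ..., x_n = t, each x_{k+1} obtained from x_k by a routing
   step, and the destination is reached only at the end. *)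
Fixpoint route_from (m : nat) (P : list point) (t x : point) (l : list point)
    : Prop :=
  match l with
  | [] => x = t
  | y :: l' => x <> t /\ route_step m P t x y /\ route_from m P t y l'
  end.

Fixpoint path_length (x : point) (l : list point) : R :=
  match l with
  | [] => 0
  | y :: l' => edist x y + path_length y l'
  end.

Definition routing_bound (m : nat) : R :=
  1 + 2 * sin (theta m / 2) * cos (theta m / 4) /
      (cos (theta m / 2) - sin (3 * theta m / 4)).

(* Routing towards t is governed by the potential
     Phi(x) = A <t - x, b> + B |(t - x) x b| = |xt| h(a),   h(a) = A cos a + B |sin a|,
   where b is the bisector of the cone of x containing t and a is the angle
   between t - x and b.  The coefficients are fixed by A cos(th/2) = 1 + B sin(th/2),
   which makes a routing step x -> y inside the cone decrease Phi by at least |xy|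
   and gives Phi(u) <= h(th/2) |uw|, the claimed bound; and by h(th/4) = h(PI/2),
   which makes h symmetric about PI/4 + th/8 and increasing before it.  After a
   step, t is still on the forward side of the old bisector as seen from y, and the
   new bisector differs from it by a multiple of th.  For odd m the old angle
   alpha <= PI/2 and the new one psi <= th/2 then satisfy psi <= alpha and
   alpha + psi <= PI/2 + th/4, so h(psi) <= h(alpha): changing cones never
   increases Phi.  Summing the decrements bounds the route length, and since Phi
   strictly decreases on the finite set P, the route terminates. *)

From Stdlib Require Import Reals ZArith Lra Lia List ClassicalEpsilon Classical.
Import ListNotations.
Open Scope R_scope.

Definition cross_coef (th : R) : R := cos (th/4) / (cos (th/2) - sin (3*th/4)).
Definition dot_coef (th : R) : R := (1 + cross_coef th * sin (th/2)) / cos (th/2).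
Definition angle_weight (th a : R) : R := dot_coef th * cos a + cross_coef th * Rabs (sin a).

Lemma cos_sin_combination_sub (A B s d : R) :
  A * cos (s + d) + B * sin (s + d) - (A * cos (s - d) + B * sin (s - d))
  = 2 * sin d * (B * cos s - A * sin s).
Proof. rewrite cos_plus, sin_plus, cos_minus, sin_minus. ring. Qed.

Section AngleWeight.
Variable th : R.
Hypothesis th_pos : 0 < th.
Hypothesis th_lt : th < 2 * PI / 5.

Lemma cos_half_pos : 0 < cos (th/2).
Proof. apply cos_gt_0; pose proof PI_RGT_0; lra. Qed.

Lemma sin_half_pos : 0 < sin (th/2).
Proof. apply sin_gt_0; pose proof PI_RGT_0; lra. Qed.

Lemma cross_coef_denom_pos : 0 < cos (th/2) - sin (3*th/4).
Proof.
  pose proof PI_RGT_0. rewrite <- sin_shift.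
  enough (sin (3*th/4) < sin (PI/2 - th/2)) by lra.
  apply sin_increasing_1; lra.
Qed.

Lemma cross_coef_pos : 0 < cross_coef th.
Proof.
  apply Rdiv_lt_0_compat; [|exact cross_coef_denom_pos].
  apply cos_gt_0; pose proof PI_RGT_0; lra.
Qed.

Lemma dot_coef_cos_half : dot_coef th * cos (th/2) = 1 + cross_coef th * sin (th/2).
Proof. unfold dot_coef. field. pose proof cos_half_pos; lra. Qed.

Lemma dot_coef_pos : 0 < dot_coef th.
Proof.
  apply Rdiv_lt_0_compat; [|exact cos_half_pos].
  pose proof cross_coef_pos; pose proof sin_half_pos; nra.
Qed.

Lemma angle_weight_quarter :
  dot_coef th * cos (th/4) + cross_coef th * sin (th/4) = cross_coef th.
Proof.
  assert (E : sin (3*th/4) = sin (th/4) * cos (th/2) + cos (th/4) * sin (th/2)).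
  { replace (3*th/4) with (th/4 + th/2) by field. apply sin_plus. }
  pose proof cross_coef_denom_pos. pose proof cos_half_pos.
  unfold dot_coef, cross_coef. rewrite E in *. field. split; lra.
Qed.

Lemma angle_weight_slope_nonneg s : 0 <= s <= PI/4 + th/8 ->
  0 <= cross_coef th * cos s - dot_coef th * sin s.
Proof.
  intros Hs. pose proof PI_RGT_0.
  assert (Hmid : cross_coef th * cos (PI/4 + th/8) - dot_coef th * sin (PI/4 + th/8) = 0).
  { pose proof (cos_sin_combination_sub (dot_coef th) (cross_coef th)
                  (PI/4 + th/8) (PI/4 - th/8)) as D.
    replace (PI/4 + th/8 + (PI/4 - th/8)) with (PI/2) in D by field.
    replace (PI/4 + th/8 - (PI/4 - th/8)) with (th/4) in D by field.
    rewrite cos_PI2, sin_PI2, angle_weight_quarter in D.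
    assert (0 < sin (PI/4 - th/8)) by (apply sin_gt_0; lra).
    apply (Rmult_eq_reg_l (2 * sin (PI/4 - th/8))); lra. }
  assert (cos (PI/4 + th/8) <= cos s) by (apply cos_decr_1; lra).
  assert (sin s <= sin (PI/4 + th/8)) by (apply sin_incr_1; lra).
  pose proof dot_coef_pos. pose proof cross_coef_pos. nra.
Qed.

Lemma angle_weight_le psi al : 0 <= psi <= al -> al + psi <= PI/2 + th/4 ->
  angle_weight th psi <= angle_weight th al.
Proof.
  intros Hpsi Hsum. pose proof PI_RGT_0. unfold angle_weight.
  rewrite !Rabs_right by (apply Rle_ge, sin_ge_0; lra).
  pose proof (cos_sin_combination_sub (dot_coef th) (cross_coef th)
                ((al + psi)/2) ((al - psi)/2)) as D.
  replace ((al + psi)/2 + (al - psi)/2) with al in D by field.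
  replace ((al + psi)/2 - (al - psi)/2) with psi in D by field.
  assert (0 <= sin ((al - psi)/2)) by (apply sin_ge_0; lra).
  pose proof (angle_weight_slope_nonneg ((al + psi)/2) ltac:(lra)). nra.
Qed.

End AngleWeight.

Lemma Z_lt_of_IZR_scaled (z w : Z) (th : R) :
  0 < th -> IZR z * th < IZR w * th -> (z < w)%Z.
Proof. intros Hth H. apply lt_IZR, (Rmult_lt_reg_r th); assumption. Qed.

Lemma IZR_scaled_le (z w : Z) (th : R) :
  0 <= th -> (z <= w)%Z -> IZR z * th <= IZR w * th.
Proof. intros Hth H. apply Rmult_le_compat_r; [assumption | now apply IZR_le]. Qed.

(* For odd m, PI/2 = m th/4 lies exactly th/4 away from the lattice (th/2)Z;
   this is the only place where the parity of m is used. *)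
Lemma odd_lattice_angle_bound (m : nat) (th al psi : R) (j : Z) :
  Nat.Odd m -> 0 < th -> INR m * th = 2 * PI ->
  0 <= psi <= th/2 -> 0 <= al <= PI/2 ->
  (al = IZR j * th + psi \/ al = IZR j * th - psi) ->
  psi <= al /\ al + psi <= PI/2 + th/4.
Proof.
  intros [r Hr] Hth Hm Hpsi Hal Hj.
  set (M := Z.of_nat m).
  assert (HM : (M = 2 * Z.of_nat r + 1)%Z) by (unfold M; lia).
  assert (HPI : PI/2 = IZR M * th / 4) by (unfold M; rewrite <- INR_IZR_INZ; lra).
  assert (Hj0 : (0 <= j)%Z).
  { enough (-1 < j)%Z by lia.
    apply (Z_lt_of_IZR_scaled _ _ th); [lra|].
    destruct Hj; lra. }
  pose proof (IZR_scaled_le 0 j th ltac:(lra) Hj0) as Hjth.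
  destruct Hj as [Hj|Hj].
  - assert (H4j : (4 * j <= M - 3 \/ 4 * j = M - 1)%Z).
    { enough (4 * j < M + 1)%Z by lia.
      apply (Z_lt_of_IZR_scaled _ _ th); [lra|].
      rewrite mult_IZR, plus_IZR. lra. }
    split; [lra|].
    destruct H4j as [H4j|H4j].
    + pose proof (IZR_scaled_le _ _ th ltac:(lra) H4j) as Hs.
      rewrite mult_IZR, minus_IZR in Hs. lra.
    + apply (f_equal IZR) in H4j. rewrite mult_IZR, minus_IZR in H4j.
      assert (IZR j * th = (IZR M - 1) * th / 4) by (rewrite <- H4j; field).
      lra.
  - assert (H4j : (4 * j <= M + 1)%Z).
    { enough (4 * j < M + 3)%Z by lia.
      apply (Z_lt_of_IZR_scaled _ _ th); [lra|].
      rewrite mult_IZR, plus_IZR. lra. }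
    pose proof (IZR_scaled_le _ _ th ltac:(lra) H4j) as Hs.
    rewrite mult_IZR, plus_IZR in Hs.
    split; [|lra].
    destruct (Z.eq_dec j 0) as [->|Hj1]; [simpl in Hj; lra|].
    pose proof (IZR_scaled_le 1 j th ltac:(lra) ltac:(lia)). lra.
Qed.

Lemma periodic_Z (f : R -> R) :
  (forall x n, f (x + 2 * INR n * PI) = f x) ->
  forall x q, f (x + 2 * PI * IZR q) = f x.
Proof.
  intros Hf x q. destruct (Z.le_ge_cases 0 q) as [Hq|Hq].
  - destruct (IZN q Hq) as [n ->].
    rewrite <- INR_IZR_INZ, <- (Hf x n). f_equal. ring.
  - destruct (IZN (- q) ltac:(lia)) as [n Hn].
    replace q with (- Z.of_nat n)%Z by lia.
    rewrite opp_IZR, <- INR_IZR_INZ, <- (Hf _ n). f_equal. ring.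
Qed.

Lemma angle_reduce x : exists q : Z, - PI <= x + 2 * PI * IZR q <= PI.
Proof.
  pose proof PI_RGT_0.
  set (y := (x + PI) / (2 * PI)).
  exists (- Zfloor y)%Z. rewrite opp_IZR.
  pose proof (Zfloor_bound y) as [Hlo Hhi].
  assert (Ey : x + PI = y * (2 * PI)) by (unfold y; field; lra).
  assert (IZR (Zfloor y) * (2 * PI) <= y * (2 * PI)) by (apply Rmult_le_compat_r; lra).
  assert (y * (2 * PI) < (IZR (Zfloor y) + 1) * (2 * PI)) by (apply Rmult_lt_compat_r; lra).
  lra.
Qed.

Lemma cos_Rabs x : cos (Rabs x) = cos x.
Proof. unfold Rabs; destruct (Rcase_abs x); [apply cos_neg | reflexivity]. Qed.

Lemma Rabs_le_of_cos_le x ph : - PI <= x <= PI -> 0 <= ph <= PI ->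
  cos ph <= cos x -> Rabs x <= ph.
Proof.
  intros Hx Hph Hcos.
  rewrite <- (cos_Rabs x) in Hcos. pose proof (Rabs_pos x).
  assert (Rabs x <= PI) by (apply Rabs_le; lra).
  apply cos_decr_0; lra.
Qed.

Lemma angle_weight_periodic th a q : angle_weight th (a + 2 * PI * IZR q) = angle_weight th a.
Proof.
  unfold angle_weight.
  rewrite (periodic_Z cos cos_period), (periodic_Z sin sin_period). reflexivity.
Qed.

Lemma angle_weight_abs th a : angle_weight th (Rabs a) = angle_weight th a.
Proof.
  unfold angle_weight. destruct (Rcase_abs a) as [h|h];
    [rewrite (Rabs_left a h), cos_neg, sin_neg, Rabs_Ropp | rewrite (Rabs_right a h)];
    reflexivity.
Qed.

Lemma angle_weight_shift (m : nat) (th a : R) (n : Z) :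
  Nat.Odd m -> 0 < th < 2 * PI / 5 -> INR m * th = 2 * PI ->
  0 <= cos a -> cos (th/2) <= cos (a + IZR n * th) ->
  angle_weight th (a + IZR n * th) <= angle_weight th a.
Proof.
  intros Hodd Hth Hm Hcos Hcos'. pose proof PI_RGT_0.
  destruct (angle_reduce a) as [q1 Ha]. destruct (angle_reduce (a + IZR n * th)) as [q2 Hb].
  rewrite <- (angle_weight_periodic th a q1), <- (angle_weight_periodic th _ q2).
  set (a0 := a + 2 * PI * IZR q1) in *. set (b0 := a + IZR n * th + 2 * PI * IZR q2) in *.
  assert (Ha0 : Rabs a0 <= PI/2).
  { apply Rabs_le_of_cos_le; try lra.
    unfold a0; rewrite (periodic_Z cos cos_period), cos_PI2; lra. }
  assert (Hb0 : Rabs b0 <= th/2).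
  { apply Rabs_le_of_cos_le; try lra.
    unfold b0; rewrite (periodic_Z cos cos_period); lra. }
  set (n' := (n + Z.of_nat m * (q2 - q1))%Z).
  assert (Eb0 : b0 = a0 + IZR n' * th).
  { unfold b0, a0, n'. rewrite plus_IZR, mult_IZR, minus_IZR, <- INR_IZR_INZ.
    replace (2 * PI) with (INR m * th). ring. }
  assert (Hj : exists j, Rabs a0 = IZR j * th + Rabs b0 \/ Rabs a0 = IZR j * th - Rabs b0).
  { destruct (Rle_or_lt 0 a0); [exists (- n')%Z | exists n']; rewrite ?opp_IZR;
      unfold Rabs; destruct (Rcase_abs a0), (Rcase_abs b0); lra. }
  destruct Hj as [j Hj].
  pose proof (Rabs_pos a0). pose proof (Rabs_pos b0).
  destruct (odd_lattice_angle_bound m th (Rabs a0) (Rabs b0) j Hodd ltac:(lra) Hm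
              ltac:(lra) ltac:(lra) Hj).
  rewrite <- (angle_weight_abs th a0), <- (angle_weight_abs th b0).
  apply angle_weight_le; lra.
Qed.

Lemma angle_weight_le_half th a : 0 < th < 2 * PI / 5 ->
  cos (th/2) <= cos a -> angle_weight th a <= angle_weight th (th/2).
Proof.
  intros Hth Hcos. pose proof PI_RGT_0.
  destruct (angle_reduce a) as [q Hq].
  rewrite <- (angle_weight_periodic th a q), <- angle_weight_abs.
  assert (Rabs (a + 2 * PI * IZR q) <= th/2).
  { apply Rabs_le_of_cos_le; try lra. rewrite (periodic_Z cos cos_period). lra. }
  pose proof (Rabs_pos (a + 2 * PI * IZR q)).
  apply angle_weight_le; lra.
Qed.

Definition vnorm (e : point) : R := sqrt (fst e ^ 2 + snd e ^ 2).
Definition unit_dir (g : R) : point := (cos g, sin g).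

Lemma vnorm_sq e : vnorm e * vnorm e = fst e ^ 2 + snd e ^ 2.
Proof. apply sqrt_sqrt. nra. Qed.

Lemma vnorm_nonneg e : 0 <= vnorm e.
Proof. apply sqrt_pos. Qed.

Lemma vnorm_pos e : e <> (0, 0) -> 0 < vnorm e.
Proof.
  intros H. destruct e as [x y]. apply sqrt_lt_R0. simpl.
  destruct (Req_dec x 0), (Req_dec y 0); subst; [congruence | nra ..].
Qed.

Lemma polar_form e : exists b, fst e = vnorm e * cos b /\ snd e = vnorm e * sin b.
Proof.
  destruct (classic (e = (0, 0))) as [->|He].
  - exists 0. rewrite sin_0, cos_0. unfold vnorm; simpl.
    replace (0 * (0 * 1) + 0 * (0 * 1)) with 0 by ring. rewrite sqrt_0. split; ring.
  - pose proof (vnorm_pos e He) as Hr. pose proof (vnorm_sq e) as Hs.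
    destruct e as [x y]; simpl in *. set (r := vnorm (x, y)) in *.
    assert (Hx : -1 <= x / r <= 1).
    { split; apply (Rmult_le_reg_r r); auto; field_simplify; nra. }
    assert (Hsin : sqrt (1 - (x / r)²) = Rabs y / r).
    { rewrite <- (sqrt_Rsqr (Rabs y / r)).
      - f_equal. unfold Rsqr.
        replace (Rabs y / r * (Rabs y / r)) with ((Rabs y * Rabs y) / (r * r)) by (field; lra).
        rewrite <- Rabs_mult, Rabs_right by nra.
        replace (y * y) with (r * r - x * x) by nra. field. lra.
      - unfold Rdiv; apply Rmult_le_pos; [apply Rabs_pos | left; apply Rinv_0_lt_compat; lra]. }
    destruct (Rle_or_lt 0 y).
    + exists (acos (x / r)). rewrite cos_acos, sin_acos, Hsin, Rabs_right by lra.
      split; field; lra.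
    + exists (- acos (x / r)).
      rewrite cos_neg, sin_neg, cos_acos, sin_acos, Hsin, Rabs_left by lra.
      split; field; lra.
Qed.

Lemma dot_cross_unit_dir_polar e r b g :
  fst e = r * cos b -> snd e = r * sin b ->
  dot e (unit_dir g) = r * cos (b - g) /\ cross e (unit_dir g) = - (r * sin (b - g)).
Proof.
  intros H1 H2. unfold dot, cross, unit_dir; simpl.
  rewrite H1, H2, cos_minus, sin_minus. split; ring.
Qed.

Definition sector_potential (th g : R) (e : point) : R :=
  dot_coef th * dot e (unit_dir g) + cross_coef th * Rabs (cross e (unit_dir g)).

Definition in_sector (th g : R) (e : point) : Prop :=
  vnorm e * cos (th/2) <= dot e (unit_dir g).

Lemma sector_potential_polar th g e r b :
  fst e = r * cos b -> snd e = r * sin b -> 0 <= r ->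
  sector_potential th g e = r * angle_weight th (b - g).
Proof.
  intros H1 H2 Hr. destruct (dot_cross_unit_dir_polar e r b g H1 H2) as [Hd Hc].
  unfold sector_potential, angle_weight. rewrite Hd, Hc.
  rewrite Rabs_Ropp, Rabs_mult, (Rabs_right r) by lra. ring.
Qed.

Section Sector.
Variable th : R.
Hypothesis th_pos : 0 < th.
Hypothesis th_lt : th < 2 * PI / 5.

Lemma cross_le_of_in_sector g e :
  in_sector th g e -> Rabs (cross e (unit_dir g)) <= vnorm e * sin (th/2).
Proof.
  unfold in_sector. intros H.
  set (D := dot e (unit_dir g)) in *. set (C := cross e (unit_dir g)).
  set (r := vnorm e) in *. set (c := cos (th/2)) in *. set (s := sin (th/2)).
  assert (Hr : 0 <= r) by apply vnorm_nonneg.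
  assert (Hc : 0 < c) by exact (cos_half_pos th th_pos th_lt).
  assert (Hs : 0 < s) by exact (sin_half_pos th th_pos th_lt).
  assert (Hsc : s * s + c * c = 1) by (pose proof (sin2_cos2 (th/2)); unfold Rsqr in *; auto).
  assert (HDC : D * D + C * C = r * r).
  { unfold D, C, r. rewrite vnorm_sq. unfold dot, cross, unit_dir; simpl.
    pose proof (sin2_cos2 g) as E. unfold Rsqr in E.
    transitivity ((fst e ^ 2 + snd e ^ 2) * (sin g * sin g + cos g * cos g)); [ring|].
    rewrite E; ring. }
  rewrite <- (Rabs_right (r * s)) by nra.
  apply Rsqr_le_abs_0. unfold Rsqr.
  assert (0 <= r * c) by nra.
  assert ((r * c) * (r * c) <= D * D) by nra.
  assert ((r * s) * (r * s) = r * r - (r * c) * (r * c)).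
  { transitivity (r * r * (s * s + c * c) - (r * c) * (r * c)); [ring | rewrite Hsc; ring]. }
  lra.
Qed.

Lemma sector_potential_step g x y t : in_sector th g (vsub y x) ->
  vnorm (vsub y x) + sector_potential th g (vsub t y) <= sector_potential th g (vsub t x).
Proof.
  intros H. pose proof (cross_le_of_in_sector g _ H) as Hcross. unfold in_sector in H.
  pose proof (dot_coef_cos_half th th_pos th_lt) as HA. pose proof (dot_coef_pos th th_pos th_lt).
  pose proof (cross_coef_pos th th_pos th_lt).
  unfold sector_potential.
  replace (dot (vsub t y) (unit_dir g))
    with (dot (vsub t x) (unit_dir g) - dot (vsub y x) (unit_dir g))
    by (unfold dot, vsub; simpl; ring).
  replace (cross (vsub t y) (unit_dir g))
    with (cross (vsub t x) (unit_dir g) - cross (vsub y x) (unit_dir g))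
    by (unfold cross, vsub; simpl; ring).
  pose proof (Rabs_triang (cross (vsub t x) (unit_dir g)) (- cross (vsub y x) (unit_dir g))).
  rewrite Rabs_Ropp in *.
  set (r := vnorm (vsub y x)) in *.
  assert (dot_coef th * (r * cos (th/2)) = r + cross_coef th * (r * sin (th/2))).
  { transitivity (r * (dot_coef th * cos (th/2))); [ring | rewrite HA; ring]. }
  assert (cross_coef th * Rabs (cross (vsub t x) (unit_dir g) + - cross (vsub y x) (unit_dir g))
          <= cross_coef th * (Rabs (cross (vsub t x) (unit_dir g))
                              + Rabs (cross (vsub y x) (unit_dir g))))
    by (apply Rmult_le_compat_l; lra).
  assert (dot_coef th * (r * cos (th/2))
          <= dot_coef th * dot (vsub y x) (unit_dir g)) by (apply Rmult_le_compat_l; lra).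
  assert (cross_coef th * Rabs (cross (vsub y x) (unit_dir g))
          <= cross_coef th * (r * sin (th/2))) by (apply Rmult_le_compat_l; lra).
  unfold Rminus. lra.
Qed.

Lemma vnorm_le_sector_potential g e : in_sector th g e -> vnorm e <= sector_potential th g e.
Proof.
  unfold in_sector, sector_potential. intros H.
  pose proof (dot_coef_cos_half th th_pos th_lt) as HA. pose proof (dot_coef_pos th th_pos th_lt).
  pose proof (cross_coef_pos th th_pos th_lt). pose proof (sin_half_pos th th_pos th_lt).
  pose proof (vnorm_nonneg e).
  assert (dot_coef th * (vnorm e * cos (th/2))
          = vnorm e + cross_coef th * (vnorm e * sin (th/2))).
  { transitivity (vnorm e * (dot_coef th * cos (th/2))); [ring | rewrite HA; ring]. }
  assert (dot_coef th * (vnorm e * cos (th/2)) <= dot_coef th * dot e (unit_dir g))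
    by (apply Rmult_le_compat_l; lra).
  assert (0 <= cross_coef th * (vnorm e * sin (th/2))) by (apply Rmult_le_pos; nra).
  assert (0 <= cross_coef th * Rabs (cross e (unit_dir g)))
    by (apply Rmult_le_pos; [lra | apply Rabs_pos]).
  lra.
Qed.

Lemma sector_potential_le g e :
  in_sector th g e -> sector_potential th g e <= angle_weight th (th/2) * vnorm e.
Proof.
  unfold in_sector. intros H. destruct (polar_form e) as [b [H1 H2]].
  pose proof (vnorm_nonneg e) as Hr.
  rewrite (sector_potential_polar th g e (vnorm e) b H1 H2 Hr).
  destruct (dot_cross_unit_dir_polar e _ b g H1 H2) as [Hdot _]. rewrite Hdot in H.
  destruct Hr as [Hr|Hr]; [|rewrite <- Hr; lra].
  pose proof (angle_weight_le_half th (b - g) ltac:(lra)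
                (Rmult_le_reg_l _ _ _ Hr H)).
  nra.
Qed.

End Sector.

Lemma sector_potential_shift (m : nat) (th g : R) (n : Z) e :
  Nat.Odd m -> 0 < th < 2 * PI / 5 -> INR m * th = 2 * PI ->
  0 <= dot e (unit_dir g) -> in_sector th (g - IZR n * th) e ->
  sector_potential th (g - IZR n * th) e <= sector_potential th g e.
Proof.
  unfold in_sector. intros Hodd Hth Hm Hdot Hsec.
  destruct (polar_form e) as [b [H1 H2]].
  pose proof (vnorm_nonneg e) as Hr.
  rewrite !(sector_potential_polar th _ e (vnorm e) b H1 H2 Hr).
  destruct (dot_cross_unit_dir_polar e _ b g H1 H2) as [Hd _].
  destruct (dot_cross_unit_dir_polar e _ b (g - IZR n * th) H1 H2) as [Hd' _].
  rewrite Hd in Hdot. rewrite Hd' in Hsec.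
  replace (b - (g - IZR n * th)) with (b - g + IZR n * th) in * by ring.
  destruct Hr as [Hr|Hr]; [|rewrite <- Hr; lra].
  apply Rmult_le_compat_l; [lra|].
  apply (angle_weight_shift m th (b - g) n Hodd Hth Hm).
  - apply (Rmult_le_reg_l (vnorm e)); lra.
  - apply (Rmult_le_reg_l (vnorm e)); lra.
Qed.

(* bisector m i is convertible to unit_dir (cone_dir m i). *)
Definition cone_dir (m i : nat) : R := PI/2 - INR i * theta m.

Section Cones.
Variable m : nat.
Hypothesis m_odd : Nat.Odd m.
Hypothesis m_ge7 : (7 <= m)%nat.

Let th := theta m.

Lemma INR_mul_theta : INR m * th = 2 * PI.
Proof. unfold th, theta. field. apply not_0_INR. lia. Qed.

Lemma theta_bounds : 0 < th < 2 * PI / 5.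
Proof.
  pose proof PI_RGT_0. pose proof INR_mul_theta.
  assert (7 <= INR m) by (replace 7 with (INR 7) by (simpl; ring); apply le_INR; lia).
  split; nra.
Qed.

Lemma cone_potential_change e (i j : nat) :
  0 <= dot e (unit_dir (cone_dir m i)) -> in_sector th (cone_dir m j) e ->
  sector_potential th (cone_dir m j) e <= sector_potential th (cone_dir m i) e.
Proof.
  replace (cone_dir m j) with (cone_dir m i - IZR (Z.of_nat j - Z.of_nat i) * th)
    by (unfold cone_dir, th; rewrite minus_IZR, <- !INR_IZR_INZ; ring).
  apply (sector_potential_shift m); [exact m_odd | exact theta_bounds | exact INR_mul_theta].
Qed.

Lemma cone_potential_indep e (i j : nat) :
  in_sector th (cone_dir m i) e -> in_sector th (cone_dir m j) e ->
  sector_potential th (cone_dir m i) e = sector_potential th (cone_dir m j) e.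
Proof.
  intros Hi Hj. pose proof theta_bounds.
  assert (Hpos : forall g, in_sector th g e -> 0 <= dot e (unit_dir g)).
  { intros g Hg. unfold in_sector in Hg.
    pose proof (vnorm_nonneg e). pose proof (cos_half_pos th ltac:(lra) ltac:(lra)). nra. }
  apply Rle_antisym; apply cone_potential_change; auto.
Qed.

Lemma in_sector_cover e : exists i, (i < m)%nat /\ in_sector th (cone_dir m i) e.
Proof.
  pose proof theta_bounds. pose proof INR_mul_theta as Hm. pose proof PI_RGT_0.
  destruct (polar_form e) as [b [H1 H2]].
  set (z := Zfloor ((PI/2 - b) / th + 1/2)).
  assert (Hz : Rabs (b - PI/2 + IZR z * th) <= th/2).
  { pose proof (Zfloor_bound ((PI/2 - b) / th + 1/2)) as [Hlo Hhi]. fold z in Hlo, Hhi.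
    assert (IZR z * th <= (PI/2 - b) + th/2).
    { replace ((PI/2 - b) + th/2) with (((PI/2 - b) / th + 1/2) * th) by (field; lra).
      apply Rmult_le_compat_r; lra. }
    assert ((PI/2 - b) - th/2 < IZR z * th).
    { replace ((PI/2 - b) - th/2) with ((((PI/2 - b) / th + 1/2) - 1) * th) by (field; lra).
      apply Rmult_lt_compat_r; lra. }
    apply Rabs_le; lra. }
  assert (Hm0 : (0 < Z.of_nat m)%Z) by lia.
  pose proof (Z.mod_pos_bound z (Z.of_nat m) Hm0) as Hmod.
  set (i := Z.to_nat (z mod Z.of_nat m)).
  exists i. split; [unfold i; lia|].
  unfold in_sector. destruct (dot_cross_unit_dir_polar e _ b (cone_dir m i) H1 H2) as [-> _].
  apply Rmult_le_compat_l; [apply vnorm_nonneg|].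
  replace (b - cone_dir m i) with (b - PI/2 + IZR z * th + 2 * PI * IZR (- (z / Z.of_nat m))).
  2:{ unfold cone_dir, i. rewrite INR_IZR_INZ, Z2Nat.id by lia. fold th.
      rewrite Zmod_eq_full by lia.
      rewrite opp_IZR, minus_IZR, mult_IZR, <- Hm, INR_IZR_INZ. ring. }
  rewrite (periodic_Z cos cos_period).
  rewrite <- (cos_Rabs (b - PI/2 + IZR z * th)).
  apply cos_decr_1; pose proof (Rabs_pos (b - PI/2 + IZR z * th)); lra.
Qed.

Lemma routing_bound_angle_weight : routing_bound m = angle_weight th (th/2).
Proof.
  pose proof theta_bounds.
  pose proof (cross_coef_denom_pos th ltac:(lra) ltac:(lra)).
  pose proof (sin_half_pos th ltac:(lra) ltac:(lra)).
  unfold angle_weight. rewrite Rabs_right by lra.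
  rewrite (dot_coef_cos_half th ltac:(lra) ltac:(lra)).
  unfold routing_bound, cross_coef. fold th. field. lra.
Qed.

End Cones.

Lemma list_argmin {A : Type} (L : list A) (Q : A -> Prop) (f : A -> R) :
  (exists v, In v L /\ Q v) ->
  exists v, In v L /\ Q v /\ forall w, In w L -> Q w -> f v <= f w.
Proof.
  induction L as [|a L IH]; intros [v [Hv Hq]]; [destruct Hv|].
  destruct (classic (exists v, In v L /\ Q v)) as [HL|HL].
  - destruct (IH HL) as [b [Hb [Hqb Hmin]]].
    destruct (classic (Q a /\ f a <= f b)) as [[Qa Hab]|Ha].
    + exists a. repeat split; [now left | exact Qa |].
      intros w [<-|Hw] Hqw; [lra | specialize (Hmin w Hw Hqw); lra].
    + exists b. repeat split; [now right | exact Hqb |].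
      intros w [<-|Hw] Hqw; [|now apply Hmin].
      destruct (Rle_or_lt (f a) (f b)); [exfalso; apply Ha; auto | lra].
  - exists a. destruct Hv as [<-|Hv]; [|exfalso; apply HL; eauto].
    repeat split; [now left | exact Hq |].
    intros w [<-|Hw] Hqw; [lra | exfalso; apply HL; eauto].
Qed.

Lemma length_filter_lt {A : Type} (f g : A -> bool) (L : list A) (y : A) :
  (forall z, f z = true -> g z = true) -> In y L -> f y = false -> g y = true ->
  (length (filter f L) < length (filter g L))%nat.
Proof.
  intros Hfg Hy Hfy Hgy.
  assert (Hle : forall L, (length (filter f L) <= length (filter g L))%nat).
  { induction L0 as [|z L0 IH]; simpl; [lia|].
    destruct (f z) eqn:Ez; [rewrite (Hfg z Ez); simpl; lia|].
    destruct (g z); simpl; lia. }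
  induction L as [|z L IH]; [destruct Hy|]. simpl.
  destruct Hy as [<-|Hy].
  - rewrite Hfy, Hgy. simpl. specialize (Hle L). lia.
  - specialize (IH Hy). destruct (f z) eqn:Ez; [rewrite (Hfg z Ez); simpl; lia|].
    destruct (g z); simpl; lia.
Qed.

Lemma edist_sym p q : edist p q = edist q p.
Proof. unfold edist. f_equal. ring. Qed.

Lemma edist_pos p q : p <> q -> 0 < edist p q.
Proof.
  intros Hpq. apply (vnorm_pos (vsub p q)). intros E. apply Hpq.
  destruct p as [px py], q as [qx qy]. unfold vsub in E; simpl in E.
  injection E as Ex Ey. f_equal; lra.
Qed.

(* Any cone of x containing t will do, by cone_potential_indep. *)
Definition route_cone (m : nat) (t x : point) : nat :=
  epsilon (inhabits 0%nat) (fun i => in_cone m x i t).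

Definition route_potential (m : nat) (t x : point) : R :=
  sector_potential (theta m) (cone_dir m (route_cone m t x)) (vsub t x).

Definition count_below (m : nat) (t : point) (P : list point) (r : R) : nat :=
  length (filter (fun z => if Rlt_dec (route_potential m t z) r then true else false) P).

Section Routing.
Variable m : nat.
Hypothesis m_odd : Nat.Odd m.
Hypothesis m_ge7 : (7 <= m)%nat.
Variables (P : list point) (t : point).
Hypothesis t_in_P : In t P.

Lemma in_cone_in_sector x i v : in_cone m x i v -> in_sector (theta m) (cone_dir m i) (vsub v x).
Proof. intros [_ [_ H]]. apply Rge_le, H. Qed.

Lemma in_cone_exists x v : x <> v -> exists i, in_cone m x i v.
Proof.
  intros Hxv. destruct (in_sector_cover m m_ge7 (vsub v x)) as [i [Hi Hsec]].
  exists i. repeat split; auto. apply Rle_ge, Hsec.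
Qed.

Lemma route_potential_eq x i : in_cone m x i t ->
  route_potential m t x = sector_potential (theta m) (cone_dir m i) (vsub t x).
Proof.
  intros Hi. pose proof (epsilon_spec (inhabits 0%nat) (fun i => in_cone m x i t)
                           (ex_intro _ i Hi)) as Hr.
  apply (cone_potential_indep m m_odd m_ge7); apply in_cone_in_sector; assumption.
Qed.

Lemma edist_le_route_potential x : x <> t -> edist x t <= route_potential m t x.
Proof.
  intros Hxt. destruct (in_cone_exists x t Hxt) as [i Hi].
  rewrite (route_potential_eq x i Hi), edist_sym.
  pose proof (theta_bounds m m_ge7). change (edist t x) with (vnorm (vsub t x)).
  apply vnorm_le_sector_potential; [lra | lra | apply in_cone_in_sector, Hi].
Qed.

Lemma route_potential_le x : x <> t -> route_potential m t x <= routing_bound m * edist x t.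
Proof.
  intros Hxt. destruct (in_cone_exists x t Hxt) as [i Hi].
  rewrite (route_potential_eq x i Hi), edist_sym, (routing_bound_angle_weight m m_ge7).
  pose proof (theta_bounds m m_ge7). change (edist t x) with (vnorm (vsub t x)).
  apply sector_potential_le; [lra | lra | apply in_cone_in_sector, Hi].
Qed.

Lemma route_potential_step x i y : in_cone m x i t -> cone_nbr m P x i y -> y <> t ->
  edist x y + route_potential m t y <= route_potential m t x.
Proof.
  intros Hi [_ [Hy Hmin]] Hyt. pose proof (theta_bounds m m_ge7).
  specialize (Hmin t t_in_P Hi). unfold proj in Hmin.
  change (bisector m i) with (unit_dir (cone_dir m i)) in Hmin.
  destruct (in_cone_exists y t Hyt) as [j Hj].
  rewrite (route_potential_eq x i Hi), (route_potential_eq y j Hj), edist_sym.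
  (* y minimizes the projection onto the bisector over the cone, t included *)
  assert (Hforward : 0 <= dot (vsub t y) (unit_dir (cone_dir m i))).
  { replace (dot (vsub t y) (unit_dir (cone_dir m i)))
      with (dot (vsub t x) (unit_dir (cone_dir m i)) - dot (vsub y x) (unit_dir (cone_dir m i)))
      by (unfold dot, vsub; simpl; ring).
    lra. }
  pose proof (cone_potential_change m m_odd m_ge7 _ i j Hforward (in_cone_in_sector _ _ _ Hj)).
  pose proof (sector_potential_step (theta m) ltac:(lra) ltac:(lra) _ x y t
                (in_cone_in_sector _ _ _ Hy)).
  change (edist y x) with (vnorm (vsub y x)). lra.
Qed.

Lemma route_length_le_potential l x : route_from m P t x l -> x <> t ->
  path_length x l <= route_potential m t x.
Proof.
  revert x. induction l as [|y l IH]; intros x Hroute Hxt; [exact (False_ind _ (Hxt Hroute))|].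
  destruct Hroute as [_ [Hstep Hroute]]. simpl.
  destruct (classic (y = t)) as [->|Hyt].
  - destruct l as [|z l]; [|destruct Hroute as [Htt _]; congruence].
    pose proof (edist_le_route_potential x Hxt). simpl. lra.
  - destruct Hstep as [[_ Eyt]|[_ [i [Hi Hnbr]]]]; [congruence|].
    pose proof (route_potential_step x i y Hi Hnbr Hyt).
    pose proof (IH y Hroute Hyt). lra.
Qed.

Lemma route_step_exists x : In x P -> x <> t ->
  exists y, In y P /\ route_step m P t x y /\
    (y = t \/ edist x y + route_potential m t y <= route_potential m t x).
Proof.
  intros HxP Hxt. destruct (classic (theta_adj m P x t)) as [Hadj|Hadj].
  - exists t. split; [exact t_in_P|]. split; [left; split; auto | left; reflexivity].
  - destruct (in_cone_exists x t Hxt) as [i Hi].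
    destruct (list_argmin P (in_cone m x i) (proj m x i) (ex_intro _ t (conj t_in_P Hi)))
      as [y [HyP [Hy Hmin]]].
    assert (Hnbr : cone_nbr m P x i y) by (split; [exact HyP | split; assumption]).
    exists y. split; [exact HyP|]. split; [right; eauto|].
    destruct (classic (y = t)) as [|Hyt]; [left; assumption|].
    right. exact (route_potential_step x i y Hi Hnbr Hyt).
Qed.

Lemma route_exists x : In x P -> exists l, route_from m P t x l.
Proof.
  remember (count_below m t P (route_potential m t x)) as n eqn:En.
  revert x En. induction n as [n IH] using lt_wf_ind. intros x En HxP.
  destruct (classic (x = t)) as [->|Hxt]; [exists []; reflexivity|].
  destruct (route_step_exists x HxP Hxt) as [y [HyP [Hstep Hy]]].
  destruct (classic (y = t)) as [->|Hyt]; [exists [t]; simpl; auto|].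
  destruct Hy as [|Hdecr]; [contradiction|].
  assert (Hxy : x <> y).
  { intros <-. destruct Hstep as [[_ E]|[_ [i [_ [_ [[_ [Hne _]] _]]]]]]; auto. }
  pose proof (edist_pos x y Hxy).
  assert (Hcount : (count_below m t P (route_potential m t y) < n)%nat).
  { subst n. apply (length_filter_lt _ _ P y); [| exact HyP | |].
    - intros z. destruct (Rlt_dec _ (route_potential m t y)), (Rlt_dec _ (route_potential m t x));
        auto; lra.
    - destruct (Rlt_dec _ _); [lra | reflexivity].
    - destruct (Rlt_dec _ _); [reflexivity | lra]. }
  destruct (IH _ Hcount y eq_refl HyP) as [l Hl].
  exists (y :: l). simpl. auto.
Qed.

End Routing.

Lemma edist_refl p : edist p p = 0.
Proof.
  unfold edist. rewrite !Rminus_diag. replace (0 ^ 2 + 0 ^ 2) with 0 by ring. apply sqrt_0.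
Qed.

Theorem theta_routing_odd (m : nat) (P : list point) (u w : point) :
  Nat.Odd m -> (7 <= m)%nat -> In u P -> In w P ->
  (exists l, route_from m P w u l) /\
  (forall l, route_from m P w u l -> path_length u l <= routing_bound m * edist u w).
Proof.
  intros Hodd H7 Hu Hw. split; [exact (route_exists m Hodd H7 P w Hw u Hu)|].
  intros l Hl. destruct (classic (u = w)) as [->|Huw].
  - destruct l as [|y l]; [|destruct Hl as [Hww _]; congruence].
    simpl. rewrite edist_refl. lra.
  - apply (Rle_trans _ (route_potential m w u)).
    + exact (route_length_le_potential m Hodd H7 P w Hw l u Hl Huw).
    + exact (route_potential_le m Hodd H7 w u Huw).
Qed.

Theorem mainTheorem14 (k m : nat) (P : list point) (u w : point) :
  (1 <= k)%nat ->
  (m = 4 * k + 3 \/ m = 4 * k + 5)%nat ->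
  NoDup P ->
  general_position m P ->
  In u P -> In w P ->
  (exists l, route_from m P w u l) /\
  (forall l, route_from m P w u l ->
     path_length u l <= routing_bound m * edist u w).
Proof.
  intros Hk Hm _ _ Hu Hw.
  apply theta_routing_odd; [| lia | assumption | assumption].
  destruct Hm as [-> | ->]; [exists (2 * k + 1)%nat | exists (2 * k + 2)%nat]; lia.
Qed.
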